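(* For all $n\ge2$, viewing $\Delta^{n-1}$ as a facet of $\Delta^n$ (so $\Delta^n=v*\Delta^{n-1}$), the inclusion $\mathcal{M}(\Delta^{n-1})\hookrightarrow\mathcal{M}(\Delta^n)$ sending each pair to itself is null-homotopic, the long exact sequence in reduced homology of the pair $(\mathcal{M}(\Delta^n),\mathcal{M}(\Delta^{n-1}))$ splits into short exact sequences, and $$\tilde H_k(\mathcal{M}(\Delta^n),\mathcal{M}(\Delta^{n-1}))\cong\tilde H_k(\mathcal{M}(\Delta^n))\oplus\tilde H_{k-1}(\mathcal{M}(\Delta^{n-1}))$$ for all $k$.
   Context: All simplicial complexes are finite abstract simplicial complexes; simplices are nonempty. $\Delta^n$ is the simplicial complex of all nonempty subsets of an $(n+1)$-element vertex set. The Hasse diagram $\mathcal{H}(K)$ of $K$ is the directed graph whose vertices are the simplices of $K$, with an edge $\sigma\to\tau$ whenever $\sigma\subsetneq\tau$ and $\dim\tau=\dim\sigma+1$. A matching on $\mathcal{H}(K)$ is a set $W$ of edges of $\mathcal{H}(K)$, no two sharing a vertex; an edge in $W$ is called a pair. $W$ is acyclic if the directed graph obtained from $\mathcal{H}(K)$ by reversing every edge in $W$ has no directed cycle. The complex of discrete Morse matchings $\mathcal{M}(K)$ is the simplicial complex whose vertices are the edges of $\mathcal{H}(K)$ and whose simplices are the nonempty acyclic matchings on $\mathcal{H}(K)$. *)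

From HB Require Import structures.
From mathcomp Require Import all_boot all_order all_algebra.
From mathcomp Require Import all_classical all_reals all_analysis.

Set Implicit Arguments.
Unset Strict Implicit.
Unset Printing Implicit Defensive.

Import Order.TTheory GRing.Theory Num.Theory.
Import numFieldNormedType.Exports.
Local Open Scope ring_scope.

(* Simplicial complexes on a finite vertex type V are given by their   *)
(* set of (nonempty) simplices K : {set {set V}}.                      *)

Definition Delta (n : nat) : {set {set 'I_n.+1}} :=
  [set s : {set 'I_n.+1} | s != finset.set0].

(* The facet of Delta^n opposite to the vertex v = ord_max; this is     *)
(* Delta^(n-1), so that Delta^n = v * Delta^(n-1).                      *)
Definition Facet (n : nat) : {set {set 'I_n.+1}} :=
  [set s : {set 'I_n.+1} | (s != finset.set0) && (ord_max \notin s)].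

(* Edges of the Hasse diagram H(K): sigma -> tau, sigma < tau, dim+1. *)
Definition hedge (V : finType) (K : {set {set V}}) (e : {set V} * {set V}) : bool :=
  [&& e.1 \in K, e.2 \in K, e.1 \subset e.2 & #|e.2| == #|e.1|.+1].

Definition hedges (V : finType) (K : {set {set V}}) : {set {set V} * {set V}} :=
  [set e | hedge K e].

Definition is_matching (V : finType) (W : {set {set V} * {set V}}) : bool :=
  [forall e in W, forall f in W,
     (e != f) ==> [&& e.1 != f.1, e.1 != f.2, e.2 != f.1 & e.2 != f.2]].

Definition mrel (V : finType) (K : {set {set V}}) (W : {set {set V} * {set V}})
  : rel {set V} :=
  fun x y => (hedge K (x, y) && ((x, y) \notin W)) || ((y, x) \in W).

Definition acyclic (V : finType) (K : {set {set V}}) (W : {set {set V} * {set V}})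
  : bool :=
  ~~ [exists x, exists y, mrel K W x y && connect (mrel K W) y x].

(* The complex of discrete Morse matchings M(K): vertices are edges of  *)
(* H(K), simplices are the nonempty acyclic matchings.                  *)
Definition MM (V : finType) (K : {set {set V}}) : {set {set ({set V} * {set V})}} :=
  [set W | [&& W != finset.set0, W \subset hedges K, is_matching W & acyclic K W]].

(* Reduced (augmented) simplicial chains with integer coefficients.    *)
(* A k-chain of L is a function on sets of vertices supported on the   *)
(* simplices of L with k+1 vertices (the empty simplex in degree -1).  *)
(* Orientation: vertices are ordered by enum_rank.                     *)

Definition cochainT (U : finType) := {ffun {set U} -> int}.

Definition chain (U : finType) (L : {set {set U}}) (k : int) (c : {ffun {set U} -> int})
  : Prop :=
  forall s, c s != 0 -> s \in finset.set0 |: L /\ (#|s|%:Z = k + 1).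

(* Boundary: d[v_0..v_k] = sum_i (-1)^i [v_0..^v_i..v_k] (augmented). *)
Definition bd (U : finType) (c : {ffun {set U} -> int}) : {ffun {set U} -> int} :=
  [ffun t : {set U} => \sum_(u | u \notin t)
      (-1) ^+ #|[set x in t | (enum_rank x < enum_rank u)%N]| * c (u |: t)].

Definition cycles (U : finType) (L : {set {set U}}) (k : int) (c : {ffun {set U} -> int})
  : Prop := chain L k c /\ bd c = 0.

Definition bnd (U : finType) (L : {set {set U}}) (k : int) (c : {ffun {set U} -> int})
  : Prop := exists d, chain L (k + 1) d /\ c = bd d.

(* H_k(X,A) = relcyc / relbnd, as subquotient of the chains of X.        *)
Definition relcyc (U : finType) (X A : {set {set U}}) (k : int)
  (c : {ffun {set U} -> int}) : Prop :=
  chain X k c /\ chain A (k - 1) (bd c).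

Definition relbnd (U : finType) (X A : {set {set U}}) (k : int)
  (c : {ffun {set U} -> int}) : Prop :=
  exists d e, [/\ chain X (k + 1) d, chain A k e & c = bd d + e].

(* Isomorphism of subquotient groups Z1/B1 ~= Z2/B2 (B_i <= Z_i        *)
(* subgroups of abelian groups G_i), given by an additive map on Z1     *)
(* inducing a well-defined bijection of the quotients.                  *)
Definition sq_iso (G1 G2 : zmodType) (Z1 B1 : G1 -> Prop) (Z2 B2 : G2 -> Prop)
  : Prop :=
  exists f : G1 -> G2,
    [/\ forall x y, Z1 x -> Z1 y -> f (x - y) = f x - f y,
        forall x, Z1 x -> Z2 (f x),
        forall x, B1 x -> B2 (f x),
        forall x, Z1 x -> B2 (f x) -> B1 x &
        forall y, Z2 y -> exists2 x, Z1 x & B2 (y - f x)].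

(* The long exact sequence of reduced homology of (X, A) splits at degree *)
(* k into  0 -> H~_k(X) -j*-> H_k(X,A) -d-> H~_(k-1)(A) -> 0  (exact).   *)
Definition les_splits_at (U : finType) (X A : {set {set U}}) (k : int) : Prop :=
  [/\ (* j_* injective *)
      forall c, cycles X k c -> relbnd X A k c -> bnd X k c,
      (* exact at H_k(X,A): ker d = im j_* *)
      forall c, relcyc X A k c -> bnd A (k - 1) (bd c) ->
        exists2 c', cycles X k c' & relbnd X A k (c - c') &
      (* d surjective *)
      forall z, cycles A (k - 1) z ->
        exists2 c, relcyc X A k c & bnd A (k - 1) (z - bd c)].

(* Geometric realization |L| inside the standard simplex of R^U,       *)
(* coordinates indexed by enum_rank.                                    *)
Definition realization (R : realType) (U : finType) (L : {set {set U}})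
  : set 'rV[R]_#|U| :=
  fun p => [/\ forall i, 0 <= p ord0 i, \sum_i p ord0 i = 1 &
              [set u | p ord0 (enum_rank u) != 0] \in L].

Arguments realization R {U} L.

Definition incl_nullhomotopic (R : realType) (U : finType) (A X : {set {set U}})
  : Prop :=
  exists (H : R * 'rV[R]_#|U| -> 'rV[R]_#|U|) (c : 'rV[R]_#|U|),
    [/\ {within `[0, 1] `*` realization R A, continuous H}%classic,
        forall t x, (`[0, 1]%classic : set R) t -> realization R A x -> realization R X (H (t, x)),
        forall x, realization R A x -> H (0, x) = x &
        forall x, realization R A x -> H (1, x) = c].

From HB Require Import structures.
From mathcomp Require Import all_boot all_order all_algebra.
From mathcomp Require Import all_classical all_reals all_analysis.
From mathcomp Require Import zify ring.

Set Implicit Arguments.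
Unset Strict Implicit.
Unset Printing Implicit Defensive.

Import Order.TTheory GRing.Theory Num.Theory.
Import numFieldNormedType.Exports.
Local Open Scope ring_scope.

(* Let v = ord_max be the cone point of Delta^n = v * Delta^(n-1) and let a be the pair
   ({v}, {v, 0}) of its Hasse diagram.  Adding a to an acyclic matching W on Delta^(n-1) yields
   an acyclic matching on Delta^n: no arrow leaves the simplices containing v, no cycle lives
   among them because 2|s|, lowered to 1 at {v, 0} when a is matched, strictly increases along
   their arrows, and a cycle avoiding v is already a cycle for W.  So M(Delta^n) contains the
   cone a * M(Delta^(n-1)).
   For any subcomplex A of X whose cone a * A lies in X, the straight-line homotopy to the vertex
   a contracts |A| inside |X|, and the chain-level cone satisfies d(a * c) = c - a * dc on
   chains of A.  This contraction makes H(X) -> H(X, A) injective and the connecting map onto,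
   and c |-> (c - a * dc, dc) induces H_k(X, A) = H_k(X) (+) H_(k-1)(A). *)

Section Boundary.

Variable U : finType.
Implicit Types (c d : {ffun {set U} -> int}) (s t : {set U}) (a u w : U).

Definition nbelow t u : nat := #|[set x in t | (enum_rank x < enum_rank u)%N]|.

Lemma bdE c t : bd c t = \sum_(u | u \notin t) (-1) ^+ nbelow t u * c (u |: t).
Proof. by rewrite ffunE. Qed.

Lemma nbelowU1 t w u : w \notin t ->
  nbelow (w |: t) u = ((enum_rank w < enum_rank u)%N + nbelow t u)%N.
Proof.
move=> wt; rewrite /nbelow.
have -> : [set x in w |: t | (enum_rank x < enum_rank u)%N] =
    if (enum_rank w < enum_rank u)%N then w |: [set x in t | (enum_rank x < enum_rank u)%N]
    else [set x in t | (enum_rank x < enum_rank u)%N].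
  apply/setP => x; case: ifP => wu; rewrite !inE;
    by case: eqVneq => [-> |] /=; rewrite ?wu ?(negbTE wt).
by case: ifP => // _; rewrite cardsU1 inE (negbTE wt).
Qed.

Lemma sign_rank_swap u w : u != w ->
  (-1) ^+ (enum_rank w < enum_rank u)%N = - (-1) ^+ (enum_rank u < enum_rank w)%N :> int.
Proof.
rewrite -(inj_eq enum_rank_inj) -(inj_eq val_inj) /=.
by case: ltngtP; rewrite ?expr0 ?expr1 ?opprK.
Qed.

Lemma bdB c d : bd (c - d) = bd c - bd d.
Proof.
apply/ffunP => t; rewrite !ffunE -sumrB; apply: eq_bigr => u _.
by rewrite !ffunE mulrBr.
Qed.

Lemma bdD c d : bd (c + d) = bd c + bd d.
Proof.
apply/ffunP => t; rewrite !ffunE -big_split; apply: eq_bigr => u _.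
by rewrite !ffunE mulrDr.
Qed.

Lemma bd0 : bd (0 : {ffun {set U} -> int}) = 0.
Proof. by rewrite -[X in bd X](subrr 0) bdB subrr. Qed.

Lemma bd_bd c : bd (bd c) = 0.
Proof.
apply/ffunP => t; rewrite bdE [RHS]ffunE.
pose F u w : int := if [&& u \notin t, w \notin t & w != u] then
  (-1) ^+ (nbelow t u + nbelow t w) * (-1) ^+ (enum_rank u < enum_rank w)%N
  * c (w |: (u |: t)) else 0.
have -> : \sum_(u | u \notin t) (-1) ^+ nbelow t u * bd c (u |: t)
          = \sum_u \sum_w F u w.
  rewrite big_mkcond; apply: eq_bigr => u _; case: ifP => ut; last first.
    by rewrite big1 // => w _; rewrite /F ut.
  rewrite bdE mulr_sumr big_mkcond; apply: eq_bigr => w _.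
  rewrite /F ut in_setU1 negb_or eq_sym andbC /=.
  case: ifP => // /andP [wt _].
  by rewrite nbelowU1 // mulrA -!exprD addnCA addnC.
have F_antisym u w : F w u = - F u w.
  rewrite /F; case: (eqVneq u w) => [-> | uw]; first by rewrite !andbF oppr0.
  rewrite !andbT andbC; case: andP => _; last by rewrite oppr0.
  by rewrite finset.setUCA addnC sign_rank_swap // mulrN mulNr.
set S := \sum_u _; suff : S = - S by lia.
by rewrite {1}/S exchange_big -sumrN; apply: eq_bigr => w _; rewrite -sumrN;
  apply: eq_bigr => u _; apply: F_antisym.
Qed.

(* [a] is inserted into [s :\ a] at its [enum_rank] position, whence the sign. *)
Definition cone a c : {ffun {set U} -> int} :=
  [ffun s : {set U} => if a \in s then (-1) ^+ nbelow (s :\ a) a * c (s :\ a) else 0].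

Lemma coneB a c d : cone a (c - d) = cone a c - cone a d.
Proof. by apply/ffunP => s; rewrite !ffunE; case: ifP; rewrite ?subr0 // mulrBr. Qed.

Lemma cone0 a : cone a 0 = 0.
Proof. by rewrite -[X in cone a X](subrr 0) coneB subrr. Qed.

Lemma bd_cone a c : (forall s, a \in s -> c s = 0) -> bd (cone a c) = c - cone a (bd c).
Proof.
move=> ca; apply/ffunP => t.
rewrite bdE [RHS]ffunE [X in _ = _ + X]ffunE [cone a _ t]ffunE.
case: (boolP (a \in t)) => ha; last first.
  rewrite subr0 (bigD1 a) //= big1 ?addr0.
    by rewrite ffunE setU11 setU1K // signrMK.
  move=> u /andP [ut ua]; rewrite ffunE in_setU1 eq_sym (negbTE ua) (negbTE ha).
  by rewrite mulr0.
rewrite ca // sub0r bdE mulr_sumr -sumrN [RHS](bigD1 a) /=; last by rewrite setD11.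
rewrite finset.setD1K // ca // !mulr0 oppr0 add0r.
apply: eq_big => [u | u ut].
  by rewrite in_setD1 negb_and negbK; case: eqVneq => [-> |] /=; rewrite ?ha ?andbT.
have ua : u != a by apply: contraNneq ut => ->.
have ut' : u \notin t :\ a by rewrite in_setD1 (negbTE ut) andbF.
rewrite ffunE in_setU1 ha orbT.
have -> : (u |: t) :\ a = u |: (t :\ a).
  by apply/setP => x; rewrite !inE; case: (eqVneq x a) => // ->; rewrite eq_sym (negbTE ua).
have -> : nbelow t u = ((enum_rank a < enum_rank u)%N + nbelow (t :\ a) u)%N.
  by rewrite -{1}(finset.setD1K ha) nbelowU1 // setD11.
rewrite nbelowU1 // !exprD sign_rank_swap //.
set A := (-1) ^+ _; have AA : A * A = 1 by rewrite -expr2 sqrr_sign.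
by rewrite -[RHS]mul1r -AA; ring.
Qed.

End Boundary.

Section Chains.

Variables (U : finType) (L : {set {set U}}).
Implicit Types (c d : {ffun {set U} -> int}) (k : int).

Lemma chain0 k : chain L k 0.
Proof. by move=> s; rewrite ffunE eqxx. Qed.

Lemma chainB k c d : chain L k c -> chain L k d -> chain L k (c - d).
Proof.
move=> hc hd s; rewrite !ffunE; case: (eqVneq (c s) 0) => [->|/hc //].
by rewrite sub0r oppr_eq0 => /hd.
Qed.

Lemma chainD k c d : chain L k c -> chain L k d -> chain L k (c + d).
Proof.
move=> hc hd s; rewrite !ffunE; case: (eqVneq (c s) 0) => [->|/hc //].
by rewrite add0r => /hd.
Qed.

Lemma bnd0 k : bnd L k 0.
Proof. by exists 0; rewrite bd0; split; first exact: chain0. Qed.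

End Chains.

Lemma chain_sub (U : finType) (A X : {set {set U}}) k c :
  {subset A <= X} -> chain A k c -> chain X k c.
Proof.
move=> sAX hc s /hc [+ ->]; rewrite !in_setU1 => /orP [-> | /sAX ->] //.
by rewrite orbT.
Qed.

Lemma segment_homotopy_continuous (R : realType) m (v : 'rV[R]_m) :
  continuous (fun z : R * 'rV[R]_m => z.2 + z.1 *: (v - z.2)).
Proof.
move=> z; apply: continuousD; first exact: cvg_snd.
apply: continuousZ; first exact: cvg_fst.
by apply: continuousD; [exact: cst_continuous | apply: continuousN; exact: cvg_snd].
Qed.

Section ConeOverSubcomplex.

Variables (U : finType) (X A : {set {set U}}) (a : U).
Hypothesis subAX : {subset A <= X}.
Hypothesis cone_subX : forall s, s \in finset.set0 |: A -> a |: s \in X.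
Hypothesis apex_notinA : forall s, s \in finset.set0 |: A -> a \notin s.

Implicit Types (c d e z : {ffun {set U} -> int}) (k : int).

Lemma chain_cone k c : chain A k c -> chain X (k + 1) (cone a c).
Proof.
move=> hc s; rewrite ffunE; case: ifP => [as1 | _]; last by rewrite eqxx.
rewrite mulf_eq0 negb_or => /andP [_ /hc [cA cdim]]; split.
  by rewrite in_setU1 -(finset.setD1K as1) cone_subX ?orbT.
by rewrite (cardsD1 a s) as1 PoszD cdim addrC.
Qed.

Lemma bd_cone_chain k c : chain A k c -> bd (cone a c) = c - cone a (bd c).
Proof.
move=> hc; apply: bd_cone => s as1; apply/eqP; apply: contraTT as1 => /hc [sA _].
exact: apex_notinA.
Qed.

Lemma bd_cone_cycle k z : cycles A k z -> bd (cone a z) = z.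
Proof. by case=> zA bz; rewrite (bd_cone_chain zA) bz cone0 subr0. Qed.

Lemma les_splits_at_cone k : les_splits_at X A k.
Proof.
split.
- move=> c [_ bc] [d [e [dX eA def_c]]].
  have eZ : cycles A k e by split=> //; move: bc; rewrite def_c bdD bd_bd add0r.
  exists (d + cone a e); split; first exact: chainD dX (chain_cone eA).
  by rewrite def_c bdD (bd_cone_cycle eZ).
- move=> c [cX _] [d [dA bcd]].
  have {}dA : chain A k d by move: dA; rewrite subrK.
  exists (c - d).
    by split; [exact: chainB cX (chain_sub subAX dA) | rewrite bdB bcd subrr].
  exists 0, d; split; [exact: chain0 | exact: dA | by rewrite bd0 add0r opprB addrC subrK].
- move=> z zA; have bz := bd_cone_cycle zA.
  exists (cone a z); last by rewrite bz subrr; exact: bnd0.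
  split; last by rewrite bz; case: zA.
  by rewrite -[k](subrK 1); exact: chain_cone zA.1.
Qed.

Lemma relative_homology_cone k :
  sq_iso (G1 := {ffun {set U} -> int})
         (G2 := ({ffun {set U} -> int} * {ffun {set U} -> int})%type)
         (relcyc X A k) (relbnd X A k)
         (fun p => cycles X k p.1 /\ cycles A (k - 1) p.2)
         (fun p => bnd X k p.1 /\ bnd A (k - 1) p.2).
Proof.
exists (fun c => (c - cone a (bd c), bd c)); split.
- move=> c d _ _; apply: injective_projections; rewrite /= bdB // coneB.
  by rewrite !opprD !opprK addrACA.
- move=> c [cX bcA]; split; split=> /=.
  + by apply: chainB cX _; rewrite -[k](subrK 1); exact: chain_cone bcA.
  + by rewrite bdB (bd_cone_chain bcA) bd_bd cone0 subr0 subrr.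
  + exact: bcA.
  + exact: bd_bd.
- move=> c [d [e [dX eA ->]]]; rewrite bdD bd_bd add0r; split=> /=.
    exists (d + cone a e); split; first exact: chainD dX (chain_cone eA).
    by rewrite bdD (bd_cone_chain eA) addrA.
  by exists e; rewrite subrK.
- move=> c [cX bcA] [[d [dX bd_d]] [e [eA bd_e]]] /=.
  have {}eA : chain A k e by move: eA; rewrite subrK.
  exists (d - cone a e), e; split=> //; first exact: chainB dX (chain_cone eA).
  by rewrite bdB (bd_cone_chain eA) -bd_e -bd_d opprB addrA !subrK.
- move=> [y z] [[/= yX by0] /= zA]; have bz := bd_cone_cycle zA.
  exists (y + cone a z).
    split; last by rewrite bdD by0 add0r bz; case: zA.
    by apply: chainD yX _; rewrite -[k](subrK 1); exact: chain_cone zA.1.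
  by rewrite bdD by0 add0r bz addrK; split; rewrite /= subrr; exact: bnd0.
Qed.

Lemma incl_nullhomotopic_cone (R : realType) : incl_nullhomotopic R A X.
Proof.
pose va : 'rV[R]_#|U| := \row_j (j == enum_rank a)%:R.
have va_sum : \sum_i va ord0 i = 1.
  rewrite (bigD1 (enum_rank a)) //= big1 => [|j ja]; first by rewrite mxE eqxx addr0.
  by rewrite mxE (negbTE ja).
exists (fun z : R * 'rV[R]_#|U| => z.2 + z.1 *: (va - z.2)), va; split.
- exact/continuous_subspaceT/segment_homotopy_continuous.
- move=> t x /=; rewrite in_itv /= => /andP [t0 t1] [x0 x_sum xA].
  have E i : (x + t *: (va - x)) ord0 i = (1 - t) * x ord0 i + t * va ord0 i.
    by rewrite !mxE; ring.
  split.
  + move=> i; rewrite E addr_ge0 ?mulr_ge0 ?subr_ge0 // mxE; by case: (i == _).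
  + by rewrite (eq_bigr _ (fun i _ => E i)) big_split /= -!mulr_sumr x_sum va_sum; ring.
  + have xa : x ord0 (enum_rank a) = 0.
      by apply/eqP; apply: contraNT (apex_notinA (setU1r _ xA)); rewrite inE.
    have [-> | t_neq0] := eqVneq t 0; first by rewrite scale0r addr0 subAX.
    pose s := if t == 1 then finset.set0 else [set u | x ord0 (enum_rank u) != 0].
    suff -> : [set u | (x + t *: (va - x)) ord0 (enum_rank u) != 0] = a |: s.
      by apply: cone_subX; rewrite /s; case: ifP; rewrite ?setU11 ?setU1r.
    apply/setP => u; rewrite in_setU1 inE E mxE.
    have [-> | ua] := eqVneq u a; first by rewrite xa mulr0 add0r eqxx mulr1.
    rewrite (inj_eq enum_rank_inj) (negbTE ua) mulr0 addr0 /s.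
    have [-> | t_neq1] := eqVneq t 1; first by rewrite subrr mul0r eqxx inE.
    by rewrite inE mulf_eq0 negb_or subr_eq0 eq_sym (negbTE t_neq1).
- by move=> x _; rewrite scale0r addr0.
- by move=> x _; rewrite scale1r addrC subrK.
Qed.

End ConeOverSubcomplex.

Section ForwardClosedPredicate.

Variables (T : finType) (e : rel T) (P : pred T).
Hypothesis e_closed : forall x y, e x y -> P x -> P y.

Lemma connect_closed x y : connect e x y -> P x -> P y.
Proof.
move=> /connectP [p + ->]; elim: p x => //= z p IHp x /andP [exz pz] Px.
exact: IHp pz (e_closed exz Px).
Qed.

Lemma connect_restrict (e' : rel T) :
  (forall x y, e x y -> ~~ P y -> e' x y) ->
  forall x y, connect e x y -> ~~ P y -> connect e' x y.
Proof.
move=> e_e' x y /connectP [p + ->]; elim: p x => //= z p IHp x /andP [exz pz] Py.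
apply: connect_trans (IHp _ pz Py); apply/connect1/e_e' => //.
by apply: contra Py => Pz; apply: connect_closed Pz; apply/connectP; exists p.
Qed.

Variable phi : T -> nat.
Hypothesis phi_lt : forall x y, e x y -> P x -> (phi x < phi y)%N.

Lemma connect_potential x y : connect e x y -> P x -> (phi x <= phi y)%N.
Proof.
move=> /connectP [p + ->]; elim: p x => //= z p IHp x /andP [exz pz] Px.
exact: leq_trans (ltnW (phi_lt exz Px)) (IHp _ pz (e_closed exz Px)).
Qed.

Lemma potential_no_cycle x y : e x y -> connect e y x -> ~~ P x.
Proof.
move=> exy cyx; apply/negP => Px.
have := leq_trans (phi_lt exy Px) (connect_potential cyx (e_closed exy Px)).
by rewrite ltnn.
Qed.

End ForwardClosedPredicate.

Lemma acyclic0 (V : finType) (K : {set {set V}}) : acyclic K finset.set0.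
Proof.
apply/existsP => -[x /existsP [y /andP [xy yx]]].
have card_lt u w : mrel K finset.set0 u w -> predT u -> (#|u| < #|w|)%N.
  by rewrite /mrel !inE orbF andbT => /and4P [_ _ _ /eqP ->].
by have := potential_no_cycle (fun _ _ _ _ => erefl) card_lt xy yx.
Qed.

Section ApexPair.

Variable n : nat.
Hypothesis n_gt0 : (0 < n)%N.

Definition apex_pair : {set 'I_n.+1} * {set 'I_n.+1} := ([set ord_max], [set ord_max; ord0]).

Lemma ord_max_neq0 : ord_max != ord0 :> 'I_n.+1.
Proof. by rewrite -(inj_eq val_inj) /= -lt0n. Qed.

Lemma hedge_Facet e : hedge (Facet n) e ->
  [/\ hedge (Delta n) e, ord_max \notin e.1 & ord_max \notin e.2].
Proof.
case/and4P; rewrite !inE => /andP [e1 ->] /andP [e2 ->] sub12 card12.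
by split=> //; apply/and4P; rewrite !inE.
Qed.

Lemma hedges_Facet_sub : hedges (Facet n) \subset hedges (Delta n).
Proof. by apply/fintype.subsetP => e; rewrite !inE => /hedge_Facet []. Qed.

Lemma hedge_apex : hedge (Delta n) apex_pair.
Proof.
apply/and4P; split; rewrite ?inE /= -?card_gt0 ?cards1 ?cards2 ?ord_max_neq0 //.
by rewrite finset.sub1set !inE eqxx.
Qed.

Section Acyclicity.

Variables W W' : {set {set 'I_n.+1} * {set 'I_n.+1}}.
Hypothesis W_Facet : W \subset hedges (Facet n).
Hypothesis W_acyclic : acyclic (Facet n) W.
Hypothesis sub_WW' : W \subset W'.
Hypothesis sub_W'W : W' \subset apex_pair |: W.

Lemma ord_max_notin_pairW e : e \in W -> ord_max \notin e.1 /\ ord_max \notin e.2.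
Proof. by move=> /(fintype.subsetP W_Facet); rewrite inE => /hedge_Facet []. Qed.

Lemma pairW'_apex x y : (x, y) \in W' -> ord_max \in y -> (x, y) = apex_pair.
Proof.
move=> /(fintype.subsetP sub_W'W); rewrite in_setU1 => /orP [/eqP // | /ord_max_notin_pairW].
by case=> _ /negP.
Qed.

Lemma mrel_ord_max_closed x y : mrel (Delta n) W' x y -> ord_max \in x -> ord_max \in y.
Proof.
move=> + xmax; case/orP => [/andP [/and4P [_ _ sxy _] _] | /pairW'_apex /(_ xmax) [-> _]].
  exact: (fintype.subsetP sxy).
by rewrite inE.
Qed.

Lemma mrel_Facet x y : mrel (Delta n) W' x y -> ord_max \notin y -> mrel (Facet n) W x y.
Proof.
move=> + ymax; case/orP => [/andP [hxy nW] | yxW'].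
  case/and4P: hxy; rewrite /= !inE => x0 y0 sxy cxy.
  have xmax : ord_max \notin x by apply: contra ymax; apply: (fintype.subsetP sxy).
  rewrite /mrel /hedge !inE /= x0 y0 xmax ymax sxy cxy.
  by rewrite (contra (fintype.subsetP sub_WW' _) nW).
apply/orP; right; move: yxW' => /(fintype.subsetP sub_W'W).
by rewrite in_setU1 => /orP [/eqP [y_eq _] | //]; rewrite y_eq inE eqxx in ymax.
Qed.

Definition apex_potential (s : {set 'I_n.+1}) : nat :=
  if (s == apex_pair.2) && (apex_pair \in W') then 1%N else (2 * #|s|)%N.

Lemma apex_potential_lt x y : mrel (Delta n) W' x y -> ord_max \in x ->
  (apex_potential x < apex_potential y)%N.
Proof.
have card_apex2 : #|apex_pair.2| = 2 by rewrite cards2 ord_max_neq0.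
move=> + xmax; case/orP => [/andP [/and4P [_ _ _ /eqP /= cxy] nW] |
                            /[dup] yxW' /pairW'_apex /(_ xmax) yx_apex].
  have -> : apex_potential y = (2 * #|y|)%N.
    rewrite /apex_potential; case: ifP => // /andP [/eqP y_eq apexW']; exfalso.
    move: cxy; rewrite y_eq card_apex2 => -[/esym/eqP/cards1P [z x_eq]].
    move: xmax nW; rewrite x_eq y_eq inE => /eqP <- /negP; apply; exact: apexW'.
  by rewrite /apex_potential; case: ifP => _; rewrite cxy mulnS addSn ltnS ?leq_addr ?leq_addl.
have [y_eq x_eq] := yx_apex; rewrite {1}/apex_potential x_eq eqxx -yx_apex yxW'.
have apex_neq : apex_pair.1 != apex_pair.2.
  by apply/eqP => /(congr1 (fun s : {set _} => #|s|)); rewrite card_apex2 cards1.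
by rewrite /apex_potential y_eq (negbTE apex_neq) cards1.
Qed.

Lemma acyclic_apex : acyclic (Delta n) W'.
Proof.
apply/existsP => -[x /existsP [y /andP [xy yx]]].
have [xmax | xmax] := boolP (ord_max \in x).
  by have := potential_no_cycle mrel_ord_max_closed apex_potential_lt xy yx; rewrite xmax.
have ymax : ord_max \notin y.
  apply: contra xmax.
  exact: (connect_closed (P := fun s : {set _} => ord_max \in s) mrel_ord_max_closed yx).
move/existsP: W_acyclic; apply; exists x; apply/existsP; exists y; rewrite mrel_Facet //=.
exact: (connect_restrict (P := fun s : {set _} => ord_max \in s)
  mrel_ord_max_closed mrel_Facet yx xmax).
Qed.

End Acyclicity.

Lemma is_matching_apex (W : {set {set 'I_n.+1} * {set 'I_n.+1}}) :
  W \subset hedges (Facet n) -> is_matching W -> is_matching (apex_pair |: W).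
Proof.
move=> W_Facet W_match.
have apex_disj f : f \in W ->
    [&& apex_pair.1 != f.1, apex_pair.1 != f.2, apex_pair.2 != f.1 & apex_pair.2 != f.2].
  move=> /(fintype.subsetP W_Facet); rewrite inE => /hedge_Facet [_ f1 f2].
  by apply/and4P; split; apply/eqP => E; [move: f1 | move: f2 | move: f1 | move: f2];
    rewrite -E !inE eqxx.
apply/forallP => e; apply/implyP; rewrite in_setU1 => /orP [/eqP -> | eW];
  apply/forallP => f; apply/implyP; rewrite in_setU1 => /orP [/eqP -> | fW];
  rewrite ?eqxx //; apply/implyP => e_neq_f.
- exact: apex_disj.
- by case/and4P: (apex_disj e eW) => *; apply/and4P; split; rewrite eq_sym.
- by move/forallP/(_ e)/implyP/(_ eW)/forallP/(_ f)/implyP/(_ fW)/implyP/(_ e_neq_f): W_match.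
Qed.

Lemma acyclic_matching_Facet (W : {set {set 'I_n.+1} * {set 'I_n.+1}}) :
  W \in finset.set0 |: MM (Facet n) ->
  [/\ W \subset hedges (Facet n), is_matching W & acyclic (Facet n) W].
Proof.
rewrite in_setU1 inE => /orP [/eqP -> | /and4P [_ ? ? ?]] //.
split; [exact: finset.sub0set | by apply/forallP => e; rewrite inE | exact: acyclic0].
Qed.

Lemma apex_notin_MM (W : {set {set 'I_n.+1} * {set 'I_n.+1}}) :
  W \in finset.set0 |: MM (Facet n) -> apex_pair \notin W.
Proof.
case/acyclic_matching_Facet => W_Facet _ _; apply/negP => /(ord_max_notin_pairW W_Facet) [].
by rewrite inE eqxx.
Qed.

Lemma MM_Facet_sub : {subset MM (Facet n) <= MM (Delta n)}.
Proof.
move=> W; rewrite !inE => /and4P [-> W_Facet -> W_acyclic] /=.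
rewrite (fintype.subset_trans W_Facet hedges_Facet_sub).
by rewrite (acyclic_apex W_Facet W_acyclic (fintype.subxx W)) // finset.subsetUr.
Qed.

Lemma MM_apex_cone (W : {set {set 'I_n.+1} * {set 'I_n.+1}}) :
  W \in finset.set0 |: MM (Facet n) -> apex_pair |: W \in MM (Delta n).
Proof.
case/acyclic_matching_Facet => W_Facet W_match W_acyclic; rewrite inE; apply/and4P; split.
- by apply/set0Pn; exists apex_pair; rewrite setU11.
- rewrite finset.subUset finset.sub1set inE hedge_apex.
  exact: fintype.subset_trans W_Facet hedges_Facet_sub.
- exact: is_matching_apex.
- by apply: acyclic_apex W_Facet W_acyclic _ _; rewrite ?finset.subsetUr.
Qed.

End ApexPair.

Theorem mainTheorem8 (n : nat) (hn : (2 <= n)%N) :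
  (forall R : realType, incl_nullhomotopic R (MM (Facet n)) (MM (Delta n))) /\
  (forall k : int, les_splits_at (MM (Delta n)) (MM (Facet n)) k) /\
  (forall k : int,
     sq_iso (G1 := {ffun {set ({set 'I_n.+1} * {set 'I_n.+1})} -> int})
            (G2 := ({ffun {set ({set 'I_n.+1} * {set 'I_n.+1})} -> int} *
                    {ffun {set ({set 'I_n.+1} * {set 'I_n.+1})} -> int})%type)
            (relcyc (MM (Delta n)) (MM (Facet n)) k)
            (relbnd (MM (Delta n)) (MM (Facet n)) k)
            (fun p => cycles (MM (Delta n)) k p.1 /\ cycles (MM (Facet n)) (k - 1) p.2)
            (fun p => bnd (MM (Delta n)) k p.1 /\ bnd (MM (Facet n)) (k - 1) p.2)).
Proof.
have n_gt0 : (0 < n)%N by apply: leq_trans hn.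
have sub := MM_Facet_sub n_gt0.
have cone_sub := MM_apex_cone n_gt0.
have apex_notin := @apex_notin_MM n.
split; [|split] => [R | k | k].
- exact: (incl_nullhomotopic_cone sub cone_sub apex_notin R).
- exact: (les_splits_at_cone sub cone_sub apex_notin k).
- exact: (relative_homology_cone cone_sub apex_notin k).
Qed.
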